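(* Let $0\le\lambda<\gamma\le\delta$. If $F\in\mathcal{R}(\gamma,\delta,\lambda)$, then $\mathrm{Re}\left\{\frac{F(z)}{z}\right\}>\frac12$ for all $z\in\mathcal{U}$.
   Context: Let $\mathcal{U}=\{z\in\mathbb{C}:|z|<1\}$ and let $\mathcal{A}$ be the class of analytic functions $F$ in $\mathcal{U}$ with $F(0)=0$, $F'(0)=1$. For real $0\le\lambda<\gamma\le\delta$, $\mathcal{R}(\gamma,\delta,\lambda)$ is the class of $F\in\mathcal{A}$ such that $\mathrm{Re}\{\gamma F'(z)+\delta zF''(z)+\frac{\delta-\gamma}{2}z^2F'''(z)\}>\lambda$ for all $z\in\mathcal{U}$. Here $F(z)/z$ at $z=0$ means its limiting value $1$. *)

From Stdlib Require Import Reals.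
From Coquelicot Require Import Coquelicot.
Open Scope R_scope.

Definition in_U (z : C) : Prop := Cmod z < 1.

Definition cderiv_on_U (f f' : C -> C) : Prop :=
  forall z : C, in_U z -> @is_derive C_AbsRing C_NormedModule f z (f' z).

(** [F] is analytic in U, with first, second and third derivatives
    [F1], [F2], [F3] on U. (Holomorphic on an open set = analytic.) *)
Definition analytic_U_with_derivs (F F1 F2 F3 : C -> C) : Prop :=
  cderiv_on_U F F1 /\ cderiv_on_U F1 F2 /\ cderiv_on_U F2 F3.

Definition classA (F F1 F2 F3 : C -> C) : Prop :=
  analytic_U_with_derivs F F1 F2 F3 /\ F 0 = 0 /\ F1 0 = 1.

Definition classR (gamma delta lambda : R) (F F1 F2 F3 : C -> C) : Prop :=
  classA F F1 F2 F3 /\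
  forall z : C, in_U z ->
    Re (RtoC gamma * F1 z + RtoC delta * z * F2 z
        + RtoC ((delta - gamma) / 2) * (z * z) * F3 z) > lambda.

(** F(z)/z, with its limiting value 1 at z = 0. *)
Definition Fquot (F : C -> C) (z : C) : C :=
  if Ceq_dec z 0 then 1 else F z / z.

From Stdlib Require Import Reals Lra Psatz.
From Coquelicot Require Import Coquelicot.
Open Scope R_scope.

(* Write p = F' + zF'' = (zF')'. The hypothesis reads Re (gamma p + k z p') > lambda >= 0 with
   k = (delta - gamma)/2 >= 0, and a minimum argument along each ray gives Re p > 0 in U.
   Since p(0) = 1, Harnack's inequality yields Re p(w) >= (1 - |w|)/(1 + |w|)
   >= 1 - 2|w| + 2|w|^2 - 2|w|^3, and two integrations along the segment [0, z] give
   Re F'(xz) >= 1 - x + 2x^2/3 - x^3/2 and Re F(z)/z >= 1 - 1/2 + 2/9 - 1/8 = 43/72 > 1/2.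

   Harnack's inequality comes from the Poisson representation of Re p on a circle |w| = rho:
   Cauchy's formula at z minus Cauchy's theorem at the reflected point rho^2/conj z. Both are
   obtained by moving circles through an affine family and differentiating under the integral
   sign. *)

Ltac unfold_C_ops :=
  repeat progress (unfold Cminus, Cplus, Copp, Cmult, minus, plus, opp, scal, mult,
    prod_plus, prod_opp, prod_scal, zero, one; simpl).

(** * Complex numbers and the unit circle *)

Lemma Cmod_le_abs_sum (x : C) : Cmod x <= Rabs (fst x) + Rabs (snd x).
Proof.
  destruct x as [a b]. unfold Cmod; simpl.
  pose proof (Rabs_pos a); pose proof (Rabs_pos b).
  assert (Ea : Rabs a * Rabs a = a * a) by (rewrite <- Rabs_mult; apply Rabs_pos_eq; nra).
  assert (Eb : Rabs b * Rabs b = b * b) by (rewrite <- Rabs_mult; apply Rabs_pos_eq; nra).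
  rewrite <- (sqrt_Rsqr (Rabs a + Rabs b)) by lra.
  apply sqrt_le_1_alt. unfold Rsqr. nra.
Qed.

Lemma Cmod_triangle_rev (a b : C) : Cmod a - Cmod b <= Cmod (a + b).
Proof.
  pose proof (Cmod_triangle (a + b) (- b)) as H.
  replace (a + b + - b)%C with a in H by ring. rewrite Cmod_opp in H. lra.
Qed.

Lemma Cminus_neq_0 (w z : C) : w <> z -> (w - z)%C <> 0%C.
Proof. intros H E. apply H. replace w with (w - z + z)%C by ring. rewrite E. ring. Qed.

Definition cis (t : R) : C := (cos t, sin t).

Lemma Cmod_cis t : Cmod (cis t) = 1.
Proof.
  unfold Cmod, cis; simpl. rewrite !Rmult_1_r, Rplus_comm.
  pose proof (sin2_cos2 t) as H. unfold Rsqr in H. rewrite H. apply sqrt_1.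
Qed.

Lemma Cinv_cis t : (/ cis t)%C = (cos t, - sin t).
Proof.
  unfold cis, Cinv; simpl. pose proof (sin2_cos2 t) as H. unfold Rsqr in H.
  replace (cos t * (cos t * 1) + sin t * (sin t * 1)) with 1 by lra. f_equal; field.
Qed.

Lemma cis_2PI : cis (2 * PI) = cis 0.
Proof. unfold cis. now rewrite cos_2PI, sin_2PI, cos_0, sin_0. Qed.

Lemma Cmod_circle r t : 0 <= r -> Cmod (RtoC r * cis t)%C = r.
Proof. intros H. rewrite Cmod_mult, Cmod_R, Cmod_cis, Rabs_pos_eq; lra. Qed.

Lemma Cmod_ray_lt_1 (x : R) (z : C) : 0 <= x <= 1 -> Cmod z < 1 -> Cmod (RtoC x * z) < 1.
Proof.
  intros Hx Hz. rewrite Cmod_mult, Cmod_R, Rabs_pos_eq by lra.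
  pose proof (Cmod_ge_0 z). nra.
Qed.

Lemma circle_avoids z rho t : 0 <= rho -> rho <> Cmod z -> (RtoC rho * cis t)%C <> z.
Proof. intros Hr Hz E. apply Hz. now rewrite <- E, Cmod_circle. Qed.

Lemma Cconj_neq_0 (c : C) : c <> 0%C -> Cconj c <> 0%C.
Proof.
  intros H E. apply H. rewrite <- (Cconj_conj c), E.
  apply injective_projections; simpl; ring.
Qed.

Lemma Re_mult_RtoC (c : C) (k : R) : Re (c * RtoC k) = Re c * k.
Proof. destruct c. unfold Re; simpl. ring. Qed.

(** * One-variable real calculus *)

Lemma RInt_derive_periodic (f f' : R -> R) :
  (forall t, is_derive f t (f' t)) -> (forall t, continuous f' t) -> f (2 * PI) = f 0 ->
  RInt f' 0 (2 * PI) = 0.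
Proof.
  intros Hd Hc Hp.
  rewrite (is_RInt_unique f' 0 (2 * PI) (minus (f (2 * PI)) (f 0))).
  - rewrite Hp. unfold minus, plus, opp; simpl. ring.
  - apply (is_RInt_derive (V := R_CompleteNormedModule)); intros; auto.
Qed.

Lemma RInt_trig c al be : RInt (fun t => c + al * cos t + be * sin t) 0 (2 * PI) = 2 * PI * c.
Proof.
  set (F := fun t => c * t + al * sin t - be * cos t).
  assert (H : is_RInt (fun t => c + al * cos t + be * sin t) 0 (2 * PI) (minus (F (2 * PI)) (F 0))).
  { apply (is_RInt_derive (V := R_CompleteNormedModule) F); intros t _.
    - unfold F. auto_derive; [easy | ring].
    - apply (@ex_derive_continuous R_AbsRing R_NormedModule). auto_derive. easy. }
  rewrite (is_RInt_unique _ _ _ _ H). unfold F.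
  rewrite cos_2PI, sin_2PI, cos_0, sin_0. unfold minus, plus, opp; simpl. ring.
Qed.

Lemma derive_nonneg_le (f f' : R -> R) a b : a <= b ->
  (forall x, a <= x <= b -> is_derive f x (f' x)) -> (forall x, a <= x <= b -> 0 <= f' x) ->
  f a <= f b.
Proof.
  intros Hab Hd Hp. destruct (Req_dec a b) as [<- | Hne]; [lra|].
  destruct (MVT_gen f a b f') as [c [Hc E]].
  - intros x Hx. rewrite Rmin_left, Rmax_right in Hx by lra. apply Hd. lra.
  - intros x Hx. rewrite Rmin_left, Rmax_right in Hx by lra. apply continuity_pt_filterlim.
    apply (@ex_derive_continuous R_AbsRing R_NormedModule). exists (f' x). apply Hd. lra.
  - rewrite Rmin_left, Rmax_right in Hc by lra. specialize (Hp c Hc). nra.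
Qed.

Lemma derive_nonpos_at_left_min (f : R -> R) a x l : is_derive f x l -> a < x ->
  (forall c, a <= c <= x -> f x <= f c) -> l <= 0.
Proof.
  intros Hd Hx Hm. destruct (Rle_dec l 0) as [|Hl]; [easy|]. exfalso.
  apply is_derive_Reals in Hd.
  destruct (Hd (l / 2) ltac:(lra)) as [del Hdel].
  pose proof (Rmin_l del (x - a)). pose proof (Rmin_r del (x - a)).
  assert (Hm1 : 0 < Rmin del (x - a)) by (apply Rmin_glb_lt; [apply cond_pos | lra]).
  set (h := - Rmin del (x - a) / 2) in *.
  specialize (Hdel h ltac:(unfold h; lra) ltac:(unfold h; rewrite Rabs_left; lra)).
  specialize (Hm (x + h) ltac:(unfold h; lra)).
  apply Rabs_def2 in Hdel. destruct Hdel as [_ Hdel].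
  assert (Hh : h < 0) by (unfold h; lra).
  assert (Hq : l / 2 < (f (x + h) - f x) / h) by lra.
  apply (Rmult_lt_compat_r (- h)) in Hq; [|lra].
  replace ((f (x + h) - f x) / h * - h) with (f x - f (x + h)) in Hq by (field; lra).
  nra.
Qed.

Lemma eq_of_Rabs_le_eps x y : (forall eps, 0 < eps -> Rabs (x - y) <= eps) -> x = y.
Proof.
  intros H. apply Rminus_diag_uniq. destruct (Req_dec (x - y) 0) as [|Hne]; [easy|].
  pose proof (Rabs_pos_lt _ Hne). specialize (H (Rabs (x - y) / 2) ltac:(lra)). lra.
Qed.

(** * Complex derivatives and derivatives of paths *)

Notation is_Cderive f z l := (@is_derive C_AbsRing C_NormedModule f z l).
Notation ex_Cderive f z := (@ex_derive C_AbsRing C_NormedModule f z).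
Notation is_Pderive g t v := (@is_derive R_AbsRing C_R_NormedModule g t v).

Lemma is_derive_eq {K : AbsRing} {V : NormedModule K} (f : K -> V) x l1 l2 :
  l1 = l2 -> is_derive f x l1 -> is_derive f x l2.
Proof. now intros ->. Qed.

Lemma is_Pderive_eq (g : R -> C) t (v1 v2 : C) : v1 = v2 -> is_Pderive g t v1 -> is_Pderive g t v2.
Proof. now intros ->. Qed.

Lemma is_Cderive_eq (f : C -> C) z (l1 l2 : C) : l1 = l2 -> is_Cderive f z l1 -> is_Cderive f z l2.
Proof. now intros ->. Qed.

Lemma is_Cderive_Cmod f z l : is_Cderive f z l <->
  forall eps, 0 < eps -> exists del, 0 < del /\
    forall h, Cmod h < del -> Cmod (f (z + h) - f z - l * h)%C <= eps * Cmod h.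
Proof.
  split.
  - intros [_ H] eps Heps.
    destruct (H z (fun P HP => HP) (mkposreal eps Heps)) as [del Hd].
    exists del. split; [apply cond_pos|]. intros h Hh.
    assert (Eh : h = minus (z + h)%C z) by (destruct z, h; unfold_C_ops; f_equal; ring).
    specialize (Hd (z + h)%C). lapply Hd.
    2:{ change (Cmod (minus (z + h)%C z) < del). now rewrite <- Eh. }
    intros Hd'. simpl in Hd'.
    replace (f (z + h) - f z - l * h)%C
      with (minus (minus (f (z + h)%C) (f z)) (scal (minus (z + h)%C z) l)).
    { replace (Cmod h) with (norm (minus (z + h)%C z)); [exact Hd'|]. now rewrite <- Eh. }
    rewrite <- Eh. generalize (f (z + h)%C) (f z). intros [] []. destruct h, l.
    unfold_C_ops. f_equal; ring.
  - intros H. split; [apply is_linear_scal_l|].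
    intros x Hx.
    apply (@is_filter_lim_locally_unique C_AbsRing (AbsRing_NormedModule C_AbsRing)) in Hx. subst x.
    intros eps. destruct (H eps (cond_pos eps)) as [del [Hdel Hd]].
    exists (mkposreal del Hdel). intros y Hy.
    change (Cmod (minus y z) < del) in Hy.
    specialize (Hd (minus y z) Hy).
    replace (z + minus y z)%C with y in Hd by (destruct y, z; unfold_C_ops; f_equal; ring).
    change (Cmod (minus (minus (f y) (f z)) (scal (minus y z) l)) <= eps * Cmod (minus y z)).
    replace (minus (minus (f y) (f z)) (scal (minus y z) l)) with (f y - f z - l * minus y z)%C.
    { exact Hd. }
    generalize (f y) (f z) (minus y z). intros [] [] []. destruct l. unfold_C_ops. f_equal; ring.
Qed.

Lemma Cmod_C_R_norm (x : C) : @norm R_AbsRing C_R_NormedModule x = Cmod x.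
Proof.
  destruct x as [a b]. change (sqrt (Rabs a ^ 2 + Rabs b ^ 2) = Cmod (a, b)).
  unfold Cmod. cbn [fst snd]. now rewrite !pow2_abs.
Qed.

Lemma is_Cderive_filterdiff_R (f : C -> C) (z l : C) : is_Cderive f z l ->
  @filterdiff R_AbsRing C_R_NormedModule C_R_NormedModule f (locally z) (fun y => y * l)%C.
Proof.
  intros Hf. split.
  - constructor.
    + intros x y. change ((x + y) * l = x * l + y * l)%C. ring.
    + intros k x. change (Cmult (k * fst x, k * snd x) l = (k * fst (x * l)%C, k * snd (x * l)%C)).
      destruct x, l; unfold Cmult; simpl; f_equal; ring.
    + exists (Cmod l + 1). split; [pose proof (Cmod_ge_0 l); lra|].
      intros x. rewrite !Cmod_C_R_norm, Cmod_mult.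
      pose proof (Cmod_ge_0 x). pose proof (Cmod_ge_0 l). nra.
  - intros x Hx. apply (@is_filter_lim_locally_unique R_AbsRing C_R_NormedModule) in Hx. subst x.
    intros eps. destruct (proj1 (is_Cderive_Cmod f z l) Hf eps (cond_pos eps)) as [del [Hdel H]].
    exists (mkposreal (del / 2) ltac:(lra)). intros y [H1 H2].
    change (Rabs (fst y - fst z) < del / 2) in H1.
    change (Rabs (snd y - snd z) < del / 2) in H2.
    set (h := (fst y - fst z, snd y - snd z) : C).
    assert (Ey : y = (z + h)%C) by (destruct y, z; unfold h, Cplus; simpl; f_equal; ring).
    assert (Hh : Cmod h < del) by (pose proof (Cmod_le_abs_sum h); unfold h in *; simpl in *; lra).
    specialize (H h Hh). rewrite !Cmod_C_R_norm.
    match goal with |- Cmod ?A <= _ * Cmod ?B =>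
      replace A with (f (z + h) - f z - l * h)%C;
      [replace B with h by (unfold h; destruct y, z; reflexivity) |] end.
    { exact H. }
    rewrite <- Ey. unfold h. generalize (f y) (f z); intros [] []. destruct y, z, l.
    unfold_C_ops. f_equal; ring.
Qed.

Lemma is_Pderive_comp (f : C -> C) (g : R -> C) (t : R) (l v : C) :
  is_Cderive f (g t) l -> is_Pderive g t v -> is_Pderive (fun s => f (g s)) t (v * l)%C.
Proof.
  intros Hf Hg. eapply filterdiff_ext_lin.
  - apply (filterdiff_comp' g f t); [exact Hg | exact (is_Cderive_filterdiff_R _ _ _ Hf)].
  - intros y. simpl. destruct v, l. unfold_C_ops. f_equal; ring.
Qed.

Lemma is_derive_Re g t v : is_Pderive g t v -> is_derive (fun s => Re (g s)) t (Re v).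
Proof.
  intros Hg. eapply filterdiff_ext_lin.
  - apply (filterdiff_comp' g (@fst R R) t); [exact Hg|].
    apply filterdiff_linear, (@is_linear_fst R_AbsRing R_NormedModule R_NormedModule).
  - reflexivity.
Qed.

Lemma is_derive_Im g t v : is_Pderive g t v -> is_derive (fun s => Im (g s)) t (Im v).
Proof.
  intros Hg. eapply filterdiff_ext_lin.
  - apply (filterdiff_comp' g (@snd R R) t); [exact Hg|].
    apply filterdiff_linear, (@is_linear_snd R_AbsRing R_NormedModule R_NormedModule).
  - reflexivity.
Qed.

Lemma is_Pderive_pair a b t a' b' : is_derive a t a' -> is_derive b t b' ->
  is_Pderive (fun s => (a s, b s)) t (a', b').
Proof.
  intros Ha Hb.
  assert (H := @is_derive_plus R_AbsRing C_R_NormedModule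
    (fun s => scal (a s) ((1, 0) : C)) (fun s => scal (b s) ((0, 1) : C)) t _ _
    (@is_derive_scal_l R_AbsRing C_R_NormedModule a t a' (1, 0) Ha)
    (@is_derive_scal_l R_AbsRing C_R_NormedModule b t b' (0, 1) Hb)).
  eapply is_derive_eq; [| eapply is_derive_ext; [| exact H]].
  - unfold_C_ops. f_equal; ring.
  - intros s. unfold_C_ops. f_equal; ring.
Qed.

Lemma is_Pderive_plus f g t u v :
  is_Pderive f t u -> is_Pderive g t v -> is_Pderive (fun s => f s + g s)%C t (u + v)%C.
Proof. apply (@is_derive_plus R_AbsRing C_R_NormedModule). Qed.

Lemma is_Pderive_const (c : C) t : is_Pderive (fun _ => c) t (RtoC 0).
Proof. apply (@is_derive_const R_AbsRing C_R_NormedModule). Qed.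

Lemma is_Pderive_mult f g t u v : is_Pderive f t u -> is_Pderive g t v ->
  is_Pderive (fun s => f s * g s)%C t (u * g t + f t * v)%C.
Proof.
  intros Hf Hg.
  pose proof (is_derive_Re _ _ _ Hf) as F1. pose proof (is_derive_Im _ _ _ Hf) as F2.
  pose proof (is_derive_Re _ _ _ Hg) as G1. pose proof (is_derive_Im _ _ _ Hg) as G2.
  pose proof (is_Pderive_pair _ _ _ _ _
    (is_derive_minus _ _ _ _ _ (Derive.is_derive_mult _ _ _ _ _ F1 G1) (Derive.is_derive_mult _ _ _ _ _ F2 G2))
    (is_derive_plus _ _ _ _ _ (Derive.is_derive_mult _ _ _ _ _ F1 G2) (Derive.is_derive_mult _ _ _ _ _ F2 G1)))
    as H.
  eapply is_derive_eq; [| eapply is_derive_ext; [| exact H]].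
  - unfold Re, Im. unfold_C_ops. f_equal; ring.
  - intros s. unfold Re, Im. unfold_C_ops. f_equal; ring.
Qed.

Lemma is_Pderive_RtoC f t l : is_derive f t l -> is_Pderive (fun s => RtoC (f s)) t (RtoC l).
Proof. intros H. apply is_Pderive_pair; [exact H | apply (@is_derive_const R_AbsRing)]. Qed.

Lemma is_Pderive_id t : is_Pderive (fun s => RtoC s) t (RtoC 1).
Proof. apply is_Pderive_RtoC, (@is_derive_id R_AbsRing). Qed.

Lemma is_Pderive_cis t : is_Pderive cis t (Ci * cis t)%C.
Proof.
  eapply is_derive_eq; [| apply is_Pderive_pair; [apply is_derive_cos | apply is_derive_sin]].
  unfold Ci, cis. unfold_C_ops. f_equal; ring.
Qed.

Lemma is_Pderive_circle (c : C) r t :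
  is_Pderive (fun s => c + RtoC r * cis s)%C t (RtoC r * (Ci * cis t))%C.
Proof.
  eapply is_Pderive_eq; [| exact (is_Pderive_plus _ _ t _ _ (is_Pderive_const c t)
    (is_Pderive_mult _ _ t _ _ (is_Pderive_const (RtoC r) t) (is_Pderive_cis t)))].
  cbv beta. ring.
Qed.

Lemma is_Cderive_AbsRing (f : C -> C) (z l : C) :
  is_Cderive f z l <-> @is_derive C_AbsRing (AbsRing_NormedModule C_AbsRing) f z l.
Proof. split; intros [_ H]; (split; [apply is_linear_scal_l | exact H]). Qed.

Lemma is_Cderive_plus (f g : C -> C) (z a b : C) :
  is_Cderive f z a -> is_Cderive g z b -> is_Cderive (fun w => f w + g w)%C z (a + b)%C.
Proof. apply (@is_derive_plus C_AbsRing C_NormedModule). Qed.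

Lemma is_Cderive_mult (f g : C -> C) (z a b : C) : is_Cderive f z a -> is_Cderive g z b ->
  is_Cderive (fun w => f w * g w)%C z (a * g z + f z * b)%C.
Proof.
  rewrite !is_Cderive_AbsRing. intros Hf Hg.
  apply (@is_derive_mult C_AbsRing f g z a b Hf Hg). apply Cmult_comm.
Qed.

Lemma is_Cderive_const (c z : C) : is_Cderive (fun _ => c) z (RtoC 0).
Proof. apply (@is_derive_const C_AbsRing C_NormedModule). Qed.

Lemma is_Cderive_id (z : C) : is_Cderive (fun w => w) z (RtoC 1).
Proof. apply is_Cderive_AbsRing, (@is_derive_id C_AbsRing). Qed.

Lemma is_Cderive_comp (f g : C -> C) (z a b : C) :
  is_Cderive g z b -> is_Cderive f (g z) a -> is_Cderive (fun w => f (g w)) z (b * a)%C.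
Proof.
  intros Hg Hf. apply is_Cderive_AbsRing in Hg.
  exact (@is_derive_comp C_AbsRing C_NormedModule f g z a b Hf Hg).
Qed.

Lemma is_Cderive_inv (z : C) : z <> 0%C -> is_Cderive Cinv z (- / (z * z))%C.
Proof.
  intros Hz. apply is_Cderive_Cmod. intros eps Heps.
  pose proof (proj1 (Cmod_gt_0 z) Hz) as Mz. set (m := Cmod z) in *.
  assert (Hm3 : 0 < m * m * m) by (repeat apply Rmult_lt_0_compat; lra).
  exists (Rmin (m / 2) (eps * (m * m * m) / 2)). split.
  { apply Rmin_glb_lt; [lra|]. apply Rdiv_lt_0_compat; [nra | lra]. }
  intros h Hh.
  assert (H1 : Cmod h < m / 2) by (eapply Rlt_le_trans; [exact Hh | apply Rmin_l]).
  assert (H2 : Cmod h < eps * (m * m * m) / 2) by (eapply Rlt_le_trans; [exact Hh | apply Rmin_r]).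
  assert (Hzh : m / 2 <= Cmod (z + h)) by (pose proof (Cmod_triangle_rev z h); unfold m in *; lra).
  assert (Nzh : (z + h)%C <> 0%C) by (intro E; rewrite E, Cmod_0 in Hzh; lra).
  replace (/ (z + h) - / z - - / (z * z) * h)%C with (h * h * / (z * z * (z + h)))%C
    by (field; auto).
  rewrite !Cmod_mult, Cmod_inv, !Cmod_mult by (repeat apply Cmult_neq_0; auto).
  fold m. pose proof (Cmod_ge_0 h). set (k := Cmod (z + h)) in *.
  apply Rmult_le_reg_r with (m * m * k); [apply Rmult_lt_0_compat; nra|].
  rewrite Rmult_assoc, Rinv_l, Rmult_1_r by (apply Rgt_not_eq, Rmult_lt_0_compat; nra).
  assert (eps * (m * m * (m / 2)) <= eps * (m * m * k))
    by (apply Rmult_le_compat_l; [lra | apply Rmult_le_compat_l; [nra | lra]]).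
  nra.
Qed.

Lemma is_Cderive_inv_sub (z0 w : C) :
  w <> z0 -> is_Cderive (fun x => / (x - z0))%C w (- (/ (w - z0) * / (w - z0)))%C.
Proof.
  intros H. pose proof (Cminus_neq_0 _ _ H) as H'.
  assert (Hsub : is_Cderive (fun x => x - z0)%C w (RtoC 1))
    by (eapply is_Cderive_eq; [| apply is_Cderive_plus; [apply is_Cderive_id | apply is_Cderive_const]];
        apply Cplus_0_r).
  eapply is_Cderive_eq; [| exact (is_Cderive_comp Cinv _ w _ _ Hsub (is_Cderive_inv _ H'))].
  field. exact H'.
Qed.

(* [C] carries two uniform structures (product and [Cmod]) that agree only up to equivalence
   of filters, so continuity of complex-valued maps is stated componentwise. *)
Definition Ccontinuous {U : UniformSpace} (X : U -> C) (p : U) : Prop :=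
  @continuous U R_UniformSpace (fun q => Re (X q)) p /\
  @continuous U R_UniformSpace (fun q => Im (X q)) p.

Section Ccontinuity.
Context {U : UniformSpace}.

Lemma Ccontinuous_continuous (X : U -> C) p : Ccontinuous X p -> @continuous U C_UniformSpace X p.
Proof.
  intros [H1 H2].
  apply (continuous_ext (fun q => (Re (X q), Im (X q)))); [intros q; now destruct (X q)|].
  apply (continuous_comp_2 (V := R_UniformSpace) (W := R_UniformSpace) (X := C_UniformSpace)
    _ _ (fun a b => (a, b))); auto.
  apply (continuous_ext (fun q => q)); [now intros [] | now intros P HP].
Qed.

Lemma Ccontinuous_comp (F : C -> C) (X : U -> C) p :
  @Ccontinuous C_UniformSpace F (X p) -> Ccontinuous X p -> Ccontinuous (fun q => F (X q)) p.
Proof.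
  intros [F1 F2] HX. apply Ccontinuous_continuous in HX.
  split; [apply (continuous_comp X (fun w => Re (F w))) | apply (continuous_comp X (fun w => Im (F w)))];
    auto.
Qed.

Lemma Ccontinuous_plus (X Y : U -> C) p :
  Ccontinuous X p -> Ccontinuous Y p -> Ccontinuous (fun q => X q + Y q)%C p.
Proof. intros [X1 X2] [Y1 Y2]. split; apply (@continuous_plus U R_AbsRing R_NormedModule); auto. Qed.

Lemma Ccontinuous_mult (X Y : U -> C) p :
  Ccontinuous X p -> Ccontinuous Y p -> Ccontinuous (fun q => X q * Y q)%C p.
Proof.
  intros [X1 X2] [Y1 Y2]. split; simpl.
  - apply (@continuous_minus U R_AbsRing R_NormedModule); apply (@continuous_mult U R_AbsRing); auto.
  - apply (@continuous_plus U R_AbsRing R_NormedModule); apply (@continuous_mult U R_AbsRing); auto.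
Qed.

Lemma Ccontinuous_const (c : C) (p : U) : Ccontinuous (fun _ => c) p.
Proof. split; apply continuous_const. Qed.

Lemma Ccontinuous_RtoC (g : U -> R) p :
  @continuous U R_UniformSpace g p -> Ccontinuous (fun q => RtoC (g q)) p.
Proof. intros H. split; [exact H | apply continuous_const]. Qed.

End Ccontinuity.

Lemma locally_C_of_Cmod (z : C) (P : C -> Prop) :
  @locally (AbsRing_UniformSpace C_AbsRing) z P -> @locally C_UniformSpace z P.
Proof.
  intros [e He]. exists (mkposreal (e / 2) ltac:(pose proof (cond_pos e); lra)).
  intros x [B1 B2]. apply He.
  change (Rabs (fst x - fst z) < e / 2) in B1. change (Rabs (snd x - snd z) < e / 2) in B2.
  change (Cmod (minus x z) < e).
  pose proof (Cmod_le_abs_sum (minus x z)) as H. destruct x, z. simpl in *. unfold Rminus in B1, B2. lra.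
Qed.

Lemma ex_Cderive_Ccontinuous (f : C -> C) (w : C) :
  ex_Cderive f w -> @Ccontinuous C_UniformSpace f w.
Proof.
  intros Hf.
  assert (Hc : @continuous C_UniformSpace C_UniformSpace f w).
  { intros P HP. apply locally_C_of_Cmod.
    exact (ex_derive_continuous (V := C_NormedModule) f w Hf P HP). }
  split; apply (continuous_comp (V := C_UniformSpace) f); auto;
    destruct (f w); [apply continuous_fst | apply continuous_snd].
Qed.

(** * Integrals over circles *)

(* [circle_int G c r] is the imaginary part of the contour integral of [G] over the circle
   of centre [c] and radius [r]. *)
Definition circle_int (G : C -> C) (c : C) (r : R) : R :=
  RInt (fun t => Re (G (c + RtoC r * cis t) * (RtoC r * cis t))%C) 0 (2 * PI).

Lemma continuous_circle_integrand (G : C -> C) c r :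
  (forall t, ex_Cderive G (c + RtoC r * cis t)%C) ->
  forall t, continuous (fun s => Re (G (c + RtoC r * cis s) * (RtoC r * cis s))%C) t.
Proof.
  intros HG t. destruct (HG t) as [l Hl].
  pose proof (is_Pderive_comp G _ t l _ Hl (is_Pderive_circle c r t)) as H1.
  pose proof (is_Pderive_mult (fun _ => RtoC r) cis t _ _ (is_Pderive_const _ t) (is_Pderive_cis t))
    as H2.
  apply (@ex_derive_continuous R_AbsRing R_NormedModule).
  eexists. exact (is_derive_Re _ _ _ (is_Pderive_mult _ _ _ _ _ H1 H2)).
Qed.

Lemma ex_RInt_circle_integrand (G : C -> C) c r :
  (forall t, ex_Cderive G (c + RtoC r * cis t)%C) ->
  ex_RInt (fun t => Re (G (c + RtoC r * cis t) * (RtoC r * cis t))%C) 0 (2 * PI).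
Proof.
  intros HG. apply (ex_RInt_continuous (V := R_CompleteNormedModule)).
  intros t _. now apply continuous_circle_integrand.
Qed.

Lemma circle_int_minus (G H : C -> C) c r :
  (forall t, ex_Cderive G (c + RtoC r * cis t)%C) ->
  (forall t, ex_Cderive H (c + RtoC r * cis t)%C) ->
  circle_int (fun w => G w - H w)%C c r = circle_int G c r - circle_int H c r.
Proof.
  intros HG HH. unfold circle_int.
  rewrite <- (RInt_minus (V := R_CompleteNormedModule)) by now apply ex_RInt_circle_integrand.
  apply RInt_ext. intros t _. simpl. unfold minus, plus, opp; simpl. ring.
Qed.

Lemma circle_int_derive (H H' : C -> C) c r :
  (forall t, is_Cderive H (c + RtoC r * cis t)%C (H' (c + RtoC r * cis t)%C)) ->
  (forall t, ex_Cderive H' (c + RtoC r * cis t)%C) ->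
  circle_int H' c r = 0.
Proof.
  intros HH HH'. unfold circle_int.
  apply (RInt_derive_periodic (fun t => Im (H (c + RtoC r * cis t)%C))).
  - intros t.
    eapply is_derive_eq;
      [| exact (is_derive_Im _ _ _ (is_Pderive_comp _ _ _ _ _ (HH t) (is_Pderive_circle c r t)))].
    generalize (H' (c + RtoC r * cis t)%C). intros [a b]. unfold cis, Ci, Re, Im. unfold_C_ops. ring.
  - now apply continuous_circle_integrand.
  - now rewrite cis_2PI.
Qed.

Section CircleHomotopy.
Variables (G G' : C -> C) (c0 c1 : C) (r0 r1 a b : R).

Let point u t : C := (c0 + RtoC u * c1 + RtoC (r0 + u * r1) * cis t)%C.

Hypothesis HG : forall u, a < u < b -> forall t,
  is_Cderive G (point u t) (G' (point u t)) /\ Ccontinuous G' (point u t).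

Let integrand u t := Re (G (point u t) * (RtoC (r0 + u * r1) * cis t))%C.
Let Dintegrand u t := Re (G' (point u t) * ((c1 + RtoC r1 * cis t) * (RtoC (r0 + u * r1) * cis t))
                          + G (point u t) * (RtoC r1 * cis t))%C.

Lemma is_Pderive_radius u t :
  is_Pderive (fun v => RtoC (r0 + v * r1) * cis t)%C u (RtoC r1 * cis t)%C.
Proof.
  assert (H : is_derive (fun v => r0 + v * r1) u r1) by (auto_derive; [easy | ring]).
  eapply is_Pderive_eq;
    [| exact (is_Pderive_mult _ _ u _ _ (is_Pderive_RtoC _ _ _ H) (is_Pderive_const (cis t) u))].
  cbv beta. ring.
Qed.

Lemma is_Pderive_point_u u t : is_Pderive (fun v => point v t) u (c1 + RtoC r1 * cis t)%C.
Proof.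
  pose proof (is_Pderive_mult (fun v => RtoC v) _ u _ _ (is_Pderive_id u) (is_Pderive_const c1 u))
    as H1.
  pose proof (is_Pderive_plus _ _ u _ _ (is_Pderive_plus _ _ u _ _ (is_Pderive_const c0 u) H1)
    (is_Pderive_radius u t)) as H.
  eapply is_Pderive_eq; [| exact H]. cbv beta. ring.
Qed.

Lemma is_derive_integrand_u u t : a < u < b -> is_derive (fun v => integrand v t) u (Dintegrand u t).
Proof.
  intros Hu. destruct (HG u Hu t) as [Hd _].
  pose proof (is_Pderive_comp G _ u _ _ Hd (is_Pderive_point_u u t)) as H1.
  pose proof (is_derive_Re _ _ _ (is_Pderive_mult _ _ _ _ _ H1 (is_Pderive_radius u t))) as H.
  eapply is_derive_eq; [| exact H]. unfold Dintegrand. f_equal. cbv beta. ring.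
Qed.

(* The [u]-derivative of the integrand is the [t]-derivative of a periodic function. *)
Lemma is_derive_Dintegrand_primitive u t : a < u < b ->
  is_derive (fun s => Im (G (point u s) * (c1 + RtoC r1 * cis s)))%C t (Dintegrand u t).
Proof.
  intros Hu. destruct (HG u Hu t) as [Hd _].
  pose proof (is_Pderive_comp G _ t _ _ Hd (is_Pderive_circle (c0 + RtoC u * c1) (r0 + u * r1) t)) as H1.
  pose proof (is_Pderive_plus _ _ t _ _ (is_Pderive_const c1 t)
    (is_Pderive_mult _ _ t _ _ (is_Pderive_const (RtoC r1) t) (is_Pderive_cis t))) as H2.
  pose proof (is_derive_Im _ _ _ (is_Pderive_mult _ _ _ _ _ H1 H2)) as H.
  eapply is_derive_eq; [| exact H].
  unfold Dintegrand. generalize (G' (point u t)) (G (point u t)). intros [] [].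
  unfold Ci, cis, Re, Im. unfold_C_ops. ring.
Qed.

Let RR := prod_UniformSpace R_UniformSpace R_UniformSpace.

Lemma Ccontinuous_cis_snd (p : R * R) : @Ccontinuous RR (fun q => cis (snd q)) p.
Proof.
  destruct p as [u t].
  split; apply (continuous_comp (U := RR) snd); try apply continuous_snd;
    apply (@ex_derive_continuous R_AbsRing R_NormedModule); auto_derive; easy.
Qed.

Lemma Ccontinuous_radius (p : R * R) : @Ccontinuous RR (fun q => RtoC (r0 + fst q * r1)) p.
Proof.
  apply Ccontinuous_RtoC.
  apply (@continuous_plus RR R_AbsRing R_NormedModule); [apply continuous_const|].
  apply (@continuous_mult RR R_AbsRing); [destruct p; apply continuous_fst | apply continuous_const].
Qed.

Lemma Ccontinuous_point (p : R * R) : @Ccontinuous RR (fun q => point (fst q) (snd q)) p.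
Proof.
  apply Ccontinuous_plus; [apply Ccontinuous_plus | apply Ccontinuous_mult].
  - apply Ccontinuous_const.
  - apply Ccontinuous_mult; [| apply Ccontinuous_const].
    apply Ccontinuous_RtoC. destruct p. apply continuous_fst.
  - apply Ccontinuous_radius.
  - apply Ccontinuous_cis_snd.
Qed.

Lemma continuity_2d_Dintegrand u t : a < u < b -> continuity_2d_pt Dintegrand u t.
Proof.
  intros Hu. apply continuity_2d_pt_filterlim.
  destruct (HG u Hu t) as [Hd Hc].
  assert (C1 : @Ccontinuous RR (fun q => G' (point (fst q) (snd q))) (u, t))
    by (apply Ccontinuous_comp; [exact Hc | apply Ccontinuous_point]).
  assert (C0 : @Ccontinuous RR (fun q => G (point (fst q) (snd q))) (u, t))
    by (apply Ccontinuous_comp; [apply ex_Cderive_Ccontinuous; eexists; exact Hd | apply Ccontinuous_point]).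
  assert (Cs : @Ccontinuous RR (fun q => RtoC r1 * cis (snd q))%C (u, t))
    by (apply Ccontinuous_mult; [apply Ccontinuous_const | apply Ccontinuous_cis_snd]).
  assert (Cr : @Ccontinuous RR (fun q => RtoC (r0 + fst q * r1) * cis (snd q))%C (u, t))
    by (apply Ccontinuous_mult; [apply Ccontinuous_radius | apply Ccontinuous_cis_snd]).
  assert (Cc : @Ccontinuous RR (fun q => c1 + RtoC r1 * cis (snd q))%C (u, t))
    by (apply Ccontinuous_plus; [apply Ccontinuous_const | exact Cs]).
  apply (Ccontinuous_plus (U := RR)); apply Ccontinuous_mult; auto.
  now apply Ccontinuous_mult.
Qed.

Lemma RInt_Dintegrand u : a < u < b -> RInt (fun t => Dintegrand u t) 0 (2 * PI) = 0.
Proof.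
  intros Hu.
  apply (RInt_derive_periodic (fun s => Im (G (point u s) * (c1 + RtoC r1 * cis s)))%C).
  - intros t. now apply is_derive_Dintegrand_primitive.
  - intros t P HP.
    destruct (proj1 (continuity_2d_pt_filterlim _ _ _) (continuity_2d_Dintegrand u t Hu) P HP)
      as [e He].
    exists e. intros v Hv. apply (He (u, v)). split; [apply ball_center | exact Hv].
  - unfold point. now rewrite cis_2PI.
Qed.

Lemma locally_interval (u : R) (P : R -> Prop) :
  a < u < b -> (forall y, a < y < b -> P y) -> locally u P.
Proof.
  intros Hu H. exists (mkposreal (Rmin (u - a) (b - u)) ltac:(apply Rmin_glb_lt; lra)).
  intros y Hy. change (Rabs (y - u) < Rmin (u - a) (b - u)) in Hy.
  pose proof (Rmin_l (u - a) (b - u)). pose proof (Rmin_r (u - a) (b - u)).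
  apply H. apply Rabs_def2 in Hy. lra.
Qed.

Lemma is_derive_circle_int u : a < u < b ->
  is_derive (fun v => RInt (integrand v) 0 (2 * PI)) u 0.
Proof.
  intros Hu.
  apply (is_derive_eq _ _ (RInt (fun t => Derive (fun v => integrand v t) u) 0 (2 * PI))).
  { rewrite (RInt_ext _ (fun t => Dintegrand u t)); [now apply RInt_Dintegrand|].
      intros t _. apply is_derive_unique, is_derive_integrand_u, Hu. }
  apply (is_derive_RInt_param integrand 0 (2 * PI) u).
  - apply locally_interval; auto. intros y Hy t _. eexists. now apply is_derive_integrand_u.
  - intros t _. apply (continuity_2d_pt_ext_loc Dintegrand); [| now apply continuity_2d_Dintegrand].
    exists (mkposreal (Rmin (u - a) (b - u)) ltac:(apply Rmin_glb_lt; lra)).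
    intros v s Hv _. simpl in Hv.
    pose proof (Rmin_l (u - a) (b - u)). pose proof (Rmin_r (u - a) (b - u)).
    apply Rabs_def2 in Hv. symmetry. apply is_derive_unique, is_derive_integrand_u. lra.
  - apply locally_interval; auto. intros y Hy.
    apply ex_RInt_circle_integrand. intros t. eexists. apply (HG y Hy t).
Qed.

Lemma circle_int_homotopy u1 u2 : a < u1 -> u1 <= u2 -> u2 < b ->
  circle_int G (c0 + RtoC u1 * c1) (r0 + u1 * r1) = circle_int G (c0 + RtoC u2 * c1) (r0 + u2 * r1).
Proof.
  intros H1 H2 H3. unfold circle_int.
  change (RInt (integrand u1) 0 (2 * PI) = RInt (integrand u2) 0 (2 * PI)).
  apply Rle_antisym.
  - apply (derive_nonneg_le (fun v => RInt (integrand v) 0 (2 * PI)) (fun _ => 0));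
      [lra | | intros; lra].
    intros x Hx. apply is_derive_circle_int. lra.
  - apply Ropp_le_cancel.
    apply (derive_nonneg_le (fun v => - RInt (integrand v) 0 (2 * PI)) (fun _ => 0));
      [lra | | intros; lra].
    intros x Hx. eapply is_derive_eq.
    2:{ apply (is_derive_opp (fun v => RInt (integrand v) 0 (2 * PI))).
        apply is_derive_circle_int. lra. }
    simpl. unfold opp; simpl. ring.
Qed.
End CircleHomotopy.

Lemma circle_int_radius_0 G c : circle_int G c 0 = 0.
Proof.
  unfold circle_int. rewrite (RInt_ext _ (fun _ => 0)), RInt_const.
  - unfold scal; simpl. unfold mult; simpl. ring.
  - intros t _. now rewrite Cmult_0_l, Cmult_0_r.
Qed.

Lemma circle_int_disk (G G' : C -> C) (M rho : R) :
  (forall w, Cmod w < M -> is_Cderive G w (G' w) /\ Ccontinuous G' w) ->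
  0 < rho < M -> circle_int G 0 rho = 0.
Proof.
  intros HG Hr. set (m := M / rho).
  assert (Hm : 1 < m) by (unfold m; apply (Rmult_lt_reg_r rho); [lra|]; field_simplify; lra).
  assert (Hmr : m * rho = M) by (unfold m; field; lra).
  assert (Hhom : forall u, - m < u < m -> forall t,
    let w := (0 + RtoC u * 0 + RtoC (0 + u * rho) * cis t)%C in
    is_Cderive G w (G' w) /\ Ccontinuous G' w).
  { intros u Hu t w. apply HG. unfold w.
    rewrite Cmult_0_r, !Cplus_0_l, Rplus_0_l, Cmod_mult, Cmod_R, Cmod_cis, Rabs_mult,
      (Rabs_pos_eq rho), Rmult_1_r by lra.
    rewrite <- Hmr. apply Rmult_lt_compat_r; [lra|]. apply Rabs_def1; lra. }
  pose proof (circle_int_homotopy G G' 0 0 0 rho (- m) m Hhom 0 1) as H.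
  rewrite !Cmult_0_r, !Cplus_0_r, Rmult_0_l, Rplus_0_r, Rplus_0_l, Rmult_1_l,
    circle_int_radius_0 in H.
  symmetry. apply H; lra.
Qed.

(* Parameter [u] gives the circle of centre (1 - u) z0 and radius s + u (rho - s): the circle of
   radius [s] about [z0] for u = 0 and the circle |w| = rho for u = 1. *)
Lemma shrinking_circle_in_disk z0 rho s u t :
  Cmod z0 < rho < 1 -> 0 < s -> 2 * s <= rho - Cmod z0 -> s <= 1 - rho -> - s / 4 < u < 1 + s / 4 ->
  Cmod (z0 + RtoC u * - z0 + RtoC (s + u * (rho - s)) * cis t) < 1 /\
  (z0 + RtoC u * - z0 + RtoC (s + u * (rho - s)) * cis t)%C <> z0.
Proof.
  intros Hr Hs Hgap Hmargin Hu.
  replace (z0 + RtoC u * - z0)%C with (RtoC (1 - u) * z0)%C by (rewrite RtoC_minus; ring).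
  set (S := s + u * (rho - s)).
  pose proof (Cmod_ge_0 z0). set (r := Cmod z0) in *.
  assert (SP : 0 < S) by (unfold S; destruct (Rle_dec 0 u); nra).
  assert (SU : Rabs u * r < S)
    by (unfold S; destruct (Rle_dec 0 u); [rewrite Rabs_pos_eq | rewrite Rabs_left]; nra).
  split.
  - eapply Rle_lt_trans; [apply Cmod_triangle|].
    rewrite Cmod_circle by lra. rewrite Cmod_mult, Cmod_R. fold r.
    destruct (Rle_dec u 1); [rewrite Rabs_pos_eq by lra | rewrite Rabs_left by lra];
      unfold S; destruct (Rle_dec 0 u); nra.
  - intros E.
    assert (Ed : (RtoC S * cis t + RtoC (- u) * z0 = RtoC (1 - u) * z0 + RtoC S * cis t - z0)%C)
      by (rewrite RtoC_opp, RtoC_minus; ring).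
    rewrite E in Ed. unfold Cminus in Ed. rewrite Cplus_opp_r in Ed.
    pose proof (Cmod_triangle_rev (RtoC S * cis t) (RtoC (- u) * z0)) as E3.
    rewrite Ed, Cmod_0, Cmod_circle, Cmod_mult, Cmod_R, Rabs_Ropp in E3 by lra. fold r in E3. lra.
Qed.

Lemma circle_int_shrink (G G' : C -> C) z0 rho s :
  (forall w, Cmod w < 1 -> w <> z0 -> is_Cderive G w (G' w) /\ Ccontinuous G' w) ->
  Cmod z0 < rho < 1 -> 0 < s -> 2 * s <= rho - Cmod z0 -> s <= 1 - rho ->
  circle_int G z0 s = circle_int G 0 rho.
Proof.
  intros HG Hr Hs Hgap Hmargin.
  assert (Hhom : forall u, - s / 4 < u < 1 + s / 4 -> forall t,
    let w := (z0 + RtoC u * - z0 + RtoC (s + u * (rho - s)) * cis t)%C in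
    is_Cderive G w (G' w) /\ Ccontinuous G' w).
  { intros u Hu t w. destruct (shrinking_circle_in_disk z0 rho s u t); auto. }
  pose proof (circle_int_homotopy G G' z0 (- z0) s (rho - s) _ _ Hhom 0 1) as H.
  rewrite Rmult_0_l, Rplus_0_r, Rmult_1_l, Cmult_0_l, Cmult_1_l, Cplus_0_r, Cplus_opp_r in H.
  replace (s + (rho - s)) with rho in H by ring.
  apply H; lra.
Qed.

(** * Cauchy's formula and Harnack's inequality *)

Definition div_lin (f : C -> C) (z0 w : C) : C := (f w * / (w - z0))%C.
Definition div_sq (f : C -> C) (z0 w : C) : C := (f w * (/ (w - z0) * / (w - z0)))%C.

Lemma circle_point_in_disk z0 s t : Cmod z0 < 1 -> 0 < s < 1 - Cmod z0 ->
  Cmod (z0 + RtoC s * cis t) < 1 /\ (z0 + RtoC s * cis t)%C <> z0.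
Proof.
  intros Hz Hs. split.
  - eapply Rle_lt_trans; [apply Cmod_triangle|]. rewrite Cmod_circle; lra.
  - intros E. assert (Cmod (RtoC s * cis t) = 0).
    { replace (RtoC s * cis t)%C with (z0 + RtoC s * cis t - z0)%C by ring.
      rewrite E. unfold Cminus. rewrite Cplus_opp_r. apply Cmod_0. }
    rewrite Cmod_circle in H; lra.
Qed.

Lemma div_sq_small_circle_expand (T : C -> C) (z0 l : C) s t : 0 < s ->
  let h := (RtoC s * cis t)%C in
  Re (div_sq T z0 (z0 + h) * h)%C - (Re l + Re (T z0) / s * cos t + Im (T z0) / s * sin t)
  = Re ((T (z0 + h) - T z0 - l * h) * / h)%C.
Proof.
  intros Hs h. assert (Hh0 : h <> 0%C) by (apply circle_avoids; rewrite ?Cmod_0; lra).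
  unfold div_sq. replace (z0 + h - z0)%C with h by ring.
  replace (T (z0 + h) * (/ h * / h) * h)%C
    with (l + T z0 * / h + (T (z0 + h) - T z0 - l * h) * / h)%C by (field; exact Hh0).
  replace (/ h)%C with (RtoC (/ s) * ((cos t, (- sin t)%R) : C))%C.
  { unfold Re, Im. unfold_C_ops. unfold Rdiv. ring. }
  unfold h. rewrite <- Cinv_cis, RtoC_inv by lra. field. split.
  - intros E. apply Hh0. unfold h. rewrite E. ring.
  - intros E. apply RtoC_inj in E. lra.
Qed.

(* The deformation argument needs a continuous derivative of the integrand. For [p/(w-z0)] it
   involves [p'], which is not known to be continuous; so Cauchy's formula is first proved for
   [T/(w-z0)^2], where [T' = p], and then transferred by integration by parts. *)
Section CauchyFormula.
Variables (T p p' : C -> C).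
Hypothesis HT : forall w, Cmod w < 1 -> is_Cderive T w (p w) /\ is_Cderive p w (p' w).

Let div_sq' z0 w := (div_sq p z0 w - RtoC 2 * T w * (/ (w - z0) * / (w - z0) * / (w - z0)))%C.

Lemma is_Cderive_div_sq z0 w : Cmod w < 1 -> w <> z0 ->
  is_Cderive (div_sq T z0) w (div_sq' z0 w) /\ Ccontinuous (div_sq' z0) w.
Proof.
  intros Hw Hz. destruct (HT w Hw) as [HT1 Hp].
  pose proof (is_Cderive_inv_sub z0 w Hz) as Hq.
  pose proof (is_Cderive_mult _ _ _ _ _ Hq Hq) as Hq2.
  split.
  - eapply is_Cderive_eq; [| exact (is_Cderive_mult _ _ _ _ _ HT1 Hq2)].
    unfold div_sq', div_sq. set (q := (/ (w - z0))%C). ring.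
  - pose proof (is_Cderive_mult _ _ _ _ _ Hp Hq2) as A.
    pose proof (is_Cderive_mult _ _ _ _ _
      (is_Cderive_mult _ _ _ _ _ (is_Cderive_const (RtoC 2) w) HT1)
      (is_Cderive_mult _ _ _ _ _ Hq2 Hq)) as B.
    apply ex_Cderive_Ccontinuous. eexists.
    exact (@is_derive_minus C_AbsRing C_NormedModule _ _ _ _ _ A B).
Qed.

Lemma circle_int_div_sq_outside z0 rho : 0 < rho < 1 -> rho < Cmod z0 ->
  circle_int (div_sq T z0) 0 rho = 0.
Proof.
  intros Hr Hz. apply (circle_int_disk _ (div_sq' z0) (Rmin 1 (Cmod z0))).
  - intros w Hw. pose proof (Rmin_l 1 (Cmod z0)). pose proof (Rmin_r 1 (Cmod z0)).
    apply is_Cderive_div_sq; [lra|]. intros ->. lra.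
  - split; [lra | apply Rmin_glb_lt; lra].
Qed.

Lemma circle_int_div_sq_near z0 : Cmod z0 < 1 -> forall eps, 0 < eps -> exists del, 0 < del /\
  forall s, 0 < s < del -> Rabs (circle_int (div_sq T z0) z0 s - 2 * PI * Re (p z0)) <= eps.
Proof.
  intros Hz eps Heps. pose proof PI_RGT_0 as Hpi.
  destruct (proj1 (is_Cderive_Cmod T z0 (p z0)) (proj1 (HT z0 Hz)) (eps / (2 * PI)))
    as [del [Hdel Hd]]; [apply Rdiv_lt_0_compat; lra|].
  exists (Rmin del (1 - Cmod z0)). split; [apply Rmin_glb_lt; lra|].
  intros s Hs. pose proof (Rmin_l del (1 - Cmod z0)). pose proof (Rmin_r del (1 - Cmod z0)).
  set (e0 := fun t => Re (div_sq T z0 (z0 + RtoC s * cis t) * (RtoC s * cis t))%C).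
  (* T(z0+h)/h = T(z0)/h + p(z0) + o(1), and Re (T(z0)/h) = g t - Re (p z0) has mean 0. *)
  set (g := fun t => Re (p z0) + (Re (T z0) / s) * cos t + (Im (T z0) / s) * sin t).
  assert (He0 : ex_RInt e0 0 (2 * PI)).
  { apply ex_RInt_circle_integrand. intros t.
    destruct (circle_point_in_disk z0 s t Hz ltac:(lra)) as [Hw Hne].
    eexists. now apply is_Cderive_div_sq. }
  assert (Hg : ex_RInt g 0 (2 * PI)).
  { apply (ex_RInt_continuous (V := R_CompleteNormedModule)). intros t _.
    apply (@ex_derive_continuous R_AbsRing R_NormedModule). unfold g. auto_derive. easy. }
  replace (circle_int (div_sq T z0) z0 s - 2 * PI * Re (p z0)) with (RInt (fun t => e0 t - g t) 0 (2 * PI))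
    by (rewrite (RInt_minus (V := R_CompleteNormedModule)) by easy; unfold g; now rewrite RInt_trig).
  replace eps with ((2 * PI - 0) * (eps / (2 * PI))) by (field; lra).
  apply abs_RInt_le_const; [lra | now apply (ex_RInt_minus (V := R_NormedModule)) |].
  intros t _. unfold e0, g. rewrite div_sq_small_circle_expand by lra.
  eapply Rle_trans; [apply re_le_Cmod|].
  rewrite Cmod_mult, Cmod_inv, Cmod_circle by (lra || (apply circle_avoids; rewrite ?Cmod_0; lra)).
  specialize (Hd (RtoC s * cis t)%C). rewrite Cmod_circle in Hd by lra.
  apply (Rmult_le_reg_r s); [lra|]. rewrite Rmult_assoc, Rinv_l by lra.
  specialize (Hd ltac:(lra)). lra.
Qed.

Lemma circle_int_div_sq_inside z0 rho : Cmod z0 < rho < 1 ->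
  circle_int (div_sq T z0) 0 rho = 2 * PI * Re (p z0).
Proof.
  intros Hr. pose proof (Cmod_ge_0 z0).
  pose proof (Rmin_l ((rho - Cmod z0) / 2) (1 - rho)).
  pose proof (Rmin_r ((rho - Cmod z0) / 2) (1 - rho)).
  set (smax := Rmin ((rho - Cmod z0) / 2) (1 - rho)) in *.
  assert (Hsmax : 0 < smax) by (apply Rmin_glb_lt; lra).
  apply eq_of_Rabs_le_eps. intros eps Heps.
  destruct (circle_int_div_sq_near z0 ltac:(lra) eps Heps) as [del [Hdel Hnear]].
  pose proof (Rmin_l smax (del / 2)). pose proof (Rmin_r smax (del / 2)).
  set (s := Rmin smax (del / 2)) in *.
  assert (Hs : 0 < s) by (apply Rmin_glb_lt; lra).
  rewrite <- (circle_int_shrink _ (div_sq' z0) z0 rho s); try lra.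
  - apply Hnear. lra.
  - intros w Hw Hne. now apply is_Cderive_div_sq.
Qed.

Lemma ex_Cderive_div_lin z0 w : Cmod w < 1 -> w <> z0 -> ex_Cderive (div_lin p z0) w.
Proof.
  intros Hw Hz. eexists.
  exact (is_Cderive_mult _ _ _ _ _ (proj2 (HT w Hw)) (is_Cderive_inv_sub z0 w Hz)).
Qed.

(* (T/(w-z0))' = p/(w-z0) - T/(w-z0)^2 has zero circle integral. *)
Lemma circle_int_div_lin z0 rho : 0 < rho < 1 -> (forall t, (RtoC rho * cis t)%C <> z0) ->
  circle_int (div_lin p z0) 0 rho = circle_int (div_sq T z0) 0 rho.
Proof.
  intros Hr Hne.
  assert (Hw : forall t, Cmod (0 + RtoC rho * cis t)%C < 1 /\ (0 + RtoC rho * cis t)%C <> z0)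
    by (intros t; rewrite Cplus_0_l, Cmod_circle; [split; [lra | apply Hne] | lra]).
  assert (Hlin : forall t, ex_Cderive (div_lin p z0) (0 + RtoC rho * cis t)%C)
    by (intros t; destruct (Hw t); now apply ex_Cderive_div_lin).
  assert (Hsq : forall t, ex_Cderive (div_sq T z0) (0 + RtoC rho * cis t)%C)
    by (intros t; destruct (Hw t); eexists; now apply is_Cderive_div_sq).
  apply Rminus_diag_uniq. rewrite <- circle_int_minus by easy.
  apply (circle_int_derive (div_lin T z0)).
  - intros t. destruct (Hw t) as [Hw1 Hw2].
    eapply is_Cderive_eq;
      [| exact (is_Cderive_mult _ _ _ _ _ (proj1 (HT _ Hw1)) (is_Cderive_inv_sub z0 _ Hw2))].
    unfold div_lin, div_sq. set (q := (/ (0 + RtoC rho * cis t - z0))%C). ring.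
  - intros t. exact (@ex_derive_minus C_AbsRing C_NormedModule _ _ _ (Hlin t) (Hsq t)).
Qed.

Lemma circle_int_div_lin_inside z rho : Cmod z < rho < 1 ->
  circle_int (div_lin p z) 0 rho = 2 * PI * Re (p z).
Proof.
  intros Hz. pose proof (Cmod_ge_0 z).
  rewrite circle_int_div_lin, circle_int_div_sq_inside; try easy; [lra|].
  intros t. apply circle_avoids; lra.
Qed.

Lemma circle_int_div_lin_outside z rho : 0 < rho < 1 -> rho < Cmod z ->
  circle_int (div_lin p z) 0 rho = 0.
Proof.
  intros Hr Hz. rewrite circle_int_div_lin, circle_int_div_sq_outside; try easy.
  intros t. apply circle_avoids; lra.
Qed.
End CauchyFormula.

Lemma poisson_kernel (w z : C) : w <> 0%C -> w <> z -> z <> 0%C ->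
  (w * / (w - z) - w * / (w - RtoC (Cmod w ^ 2) * / Cconj z))%C
  = RtoC ((Cmod w ^ 2 - Cmod z ^ 2) / Cmod (w - z) ^ 2).
Proof.
  intros Hw Hwz Hz.
  pose proof (Cminus_neq_0 _ _ Hwz) as Hd.
  assert (Hdc : (Cconj w - Cconj z)%C <> 0%C) by (rewrite <- Cminus_conj; now apply Cconj_neq_0).
  pose proof (Cconj_neq_0 z Hz) as Hzc.
  assert (Hm : Cmod (w - z) <> 0) by (intros E; now apply Cmod_eq_0 in E).
  rewrite RtoC_div, RtoC_minus, !Cmod2_conj, Cminus_conj by (apply pow_nonzero; exact Hm).
  assert (Hden : (w * Cconj z - w * Cconj w)%C <> 0%C).
  { intros E. apply (Cmult_neq_0 _ _ Hw Hdc).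
    replace (w * (Cconj w - Cconj z))%C with (- (w * Cconj z - w * Cconj w))%C by ring.
    rewrite E. ring. }
  field. repeat split; auto.
Qed.

Lemma poisson_kernel_lower_bound rho r d : 0 <= r < rho -> 0 < d <= rho + r ->
  (rho - r) / (rho + r) <= (rho ^ 2 - r ^ 2) / d ^ 2.
Proof.
  intros Hr Hd.
  replace ((rho - r) / (rho + r)) with ((rho ^ 2 - r ^ 2) / (rho + r) ^ 2) by (field; lra).
  apply Rmult_le_compat_l; [nra|]. apply Rinv_le_contravar; nra.
Qed.

Definition circle_reflect (rho : R) (z : C) : C := (RtoC (rho ^ 2) * / Cconj z)%C.

Lemma Cmod_circle_reflect rho z : 0 < Cmod z < rho -> rho < Cmod (circle_reflect rho z).
Proof.
  intros Hz. assert (Hz0 : z <> 0%C) by (apply Cmod_gt_0; lra).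
  unfold circle_reflect. rewrite Cmod_mult, Cmod_R, Cmod_inv, Cmod_conj by now apply Cconj_neq_0.
  rewrite Rabs_pos_eq by nra. apply (Rmult_lt_reg_r (Cmod z)); [lra|].
  field_simplify; nra.
Qed.

Lemma poisson_integrand_ge (p : C -> C) (z w : C) rho : Cmod w = rho -> 0 < Cmod z < rho ->
  0 <= Re (p w) ->
  (rho - Cmod z) / (rho + Cmod z) * Re (div_lin p 0 w * w)%C <=
  Re ((div_lin p z w - div_lin p (circle_reflect rho z) w) * w)%C.
Proof.
  intros Hw Hz Hpw.
  assert (Hz0 : z <> 0%C) by (apply Cmod_gt_0; lra).
  assert (Hw0 : w <> 0%C) by (intros E; rewrite E, Cmod_0 in Hw; lra).
  assert (Hwz : w <> z) by (intros E; rewrite E in Hw; lra).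
  unfold div_lin, circle_reflect. rewrite <- Hw.
  replace ((p w * / (w - z) - p w * / (w - RtoC (Cmod w ^ 2) * / Cconj z)) * w)%C
    with (p w * (w * / (w - z) - w * / (w - RtoC (Cmod w ^ 2) * / Cconj z)))%C by ring.
  replace (w - 0)%C with w by ring.
  replace (p w * / w * w)%C with (p w) by (field; exact Hw0).
  rewrite poisson_kernel, Re_mult_RtoC, Rmult_comm by easy.
  apply Rmult_le_compat_l; [easy|].
  apply poisson_kernel_lower_bound; [lra|]. split.
  - now apply Cmod_gt_0, Cminus_neq_0.
  - unfold Cminus. rewrite <- (Cmod_opp z). apply Cmod_triangle.
Qed.

Theorem harnack_lower_bound (T p p' : C -> C) :
  (forall w, Cmod w < 1 -> is_Cderive T w (p w) /\ is_Cderive p w (p' w)) ->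
  (forall w, Cmod w < 1 -> 0 <= Re (p w)) ->
  forall z rho, Cmod z < rho < 1 -> (rho - Cmod z) / (rho + Cmod z) * Re (p 0) <= Re (p z).
Proof.
  intros HT Hpos z rho Hz. pose proof PI_RGT_0.
  destruct (Ceq_dec z 0) as [-> | Hz0].
  { rewrite Cmod_0 in *. replace ((rho - 0) / (rho + 0)) with 1 by (field; lra). lra. }
  pose proof (proj1 (Cmod_gt_0 z) Hz0).
  pose proof (Cmod_circle_reflect rho z ltac:(lra)) as Hzs.
  set (zs := circle_reflect rho z) in *. set (m := (rho - Cmod z) / (rho + Cmod z)).
  assert (Hex : forall z0, Cmod z0 <> rho -> forall t, ex_Cderive (div_lin p z0) (0 + RtoC rho * cis t)%C).
  { intros z0 Hz0' t. rewrite Cplus_0_l.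
    apply (ex_Cderive_div_lin T p p' HT); [rewrite Cmod_circle | apply circle_avoids]; lra. }
  assert (Hex0 := ex_RInt_circle_integrand (div_lin p 0) 0 rho (Hex 0 ltac:(rewrite Cmod_0; lra))).
  assert (Hle : m * circle_int (div_lin p 0) 0 rho <=
                circle_int (fun x => div_lin p z x - div_lin p zs x)%C 0 rho).
  { unfold circle_int.
    replace (m * _) with (RInt (fun t => m * Re (div_lin p 0 (0 + RtoC rho * cis t) * (RtoC rho * cis t))%C) 0 (2 * PI))
      by exact (RInt_scal (V := R_CompleteNormedModule) _ _ _ m Hex0).
    apply RInt_le; [lra | exact (ex_RInt_scal (V := R_NormedModule) _ _ _ m Hex0) | |].
    - apply (ex_RInt_circle_integrand (fun x => div_lin p z x - div_lin p zs x)%C 0 rho). intros t.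
      apply (@ex_derive_minus C_AbsRing C_NormedModule); apply Hex; lra.
    - intros t _. rewrite Cplus_0_l. apply poisson_integrand_ge; [apply Cmod_circle | | apply Hpos]; try lra.
      rewrite Cmod_circle; lra. }
  rewrite circle_int_minus in Hle by (apply Hex; lra).
  rewrite (circle_int_div_lin_inside T p p' HT z rho Hz) in Hle.
  rewrite (circle_int_div_lin_outside T p p' HT zs rho ltac:(lra) Hzs) in Hle.
  rewrite (circle_int_div_lin_inside T p p' HT 0 rho ltac:(rewrite Cmod_0; lra)) in Hle.
  apply (Rmult_le_reg_l (2 * PI)); lra.
Qed.

(** * Positivity and growth along rays *)

Lemma is_Pderive_ray (H H' : C -> C) (z : C) x :
  is_Cderive H (RtoC x * z)%C (H' (RtoC x * z)%C) ->
  is_Pderive (fun y => H (RtoC y * z)%C) x (z * H' (RtoC x * z))%C.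
Proof.
  intros Hd.
  pose proof (is_Pderive_mult (fun y => RtoC y) (fun _ => z) x _ _ (is_Pderive_id x) (is_Pderive_const z x))
    as Hpath.
  eapply is_Pderive_eq; [| exact (is_Pderive_comp H _ x _ _ Hd Hpath)]. cbv beta. ring.
Qed.

Lemma Re_ray_lower_bound (H H' : C -> C) (Q q : R -> R) (z : C) : z <> 0%C ->
  (forall x, 0 <= x <= 1 -> is_Cderive H (RtoC x * z)%C (H' (RtoC x * z)%C)) ->
  (forall x, 0 <= x <= 1 -> is_derive Q x (q x)) ->
  (forall x, 0 <= x <= 1 -> q x <= Re (H' (RtoC x * z)%C)) ->
  forall y, 0 <= y <= 1 -> Q y - Q 0 <= Re (H (RtoC y * z) / z)%C - Re (H 0 / z)%C.
Proof.
  intros Hz HH HQ Hq y Hy.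
  assert (Hd : forall x, 0 <= x <= 1 ->
    is_derive (fun s => Re (H (RtoC s * z) / z)%C - Q s) x (Re (H' (RtoC x * z)%C) - q x)).
  { intros x Hx. apply (is_derive_minus (fun s => Re (H (RtoC s * z) / z)%C) Q); [| now apply HQ].
    eapply is_derive_eq; [| apply is_derive_Re, (is_Pderive_mult _ (fun _ => / z)%C);
      [apply is_Pderive_ray, HH, Hx | apply is_Pderive_const]].
    f_equal. cbv beta. field. exact Hz. }
  pose proof (derive_nonneg_le (fun s => Re (H (RtoC s * z) / z)%C - Q s)
    (fun x => Re (H' (RtoC x * z)%C) - q x) 0 y ltac:(lra)) as Hmono.
  cbv beta in Hmono. rewrite Cmult_0_l in Hmono.
  enough (Re (H 0 / z)%C - Q 0 <= Re (H (RtoC y * z) / z)%C - Q y) by lra.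
  apply Hmono; intros x Hx; [apply Hd | specialize (Hq x)]; lra.
Qed.

Lemma Re_pos_of_Re_combination_pos (p p' : C -> C) (g k : R) :
  0 <= g -> 0 <= k -> 0 < Re (p 0) ->
  (forall w, Cmod w < 1 -> is_Cderive p w (p' w)) ->
  (forall w, Cmod w < 1 -> 0 < Re (RtoC g * p w + RtoC k * w * p' w)%C) ->
  forall w, Cmod w < 1 -> 0 < Re (p w).
Proof.
  intros Hg Hk Hp0 Hd Hcomb zeta Hz.
  (* At a minimum of [u] on [0, 1] the radial derivative is nonpositive. *)
  set (u := fun x => Re (p (RtoC x * zeta))%C).
  assert (Hin : forall x, 0 <= x <= 1 -> Cmod (RtoC x * zeta) < 1)
    by (intros x Hx; now apply Cmod_ray_lt_1).
  assert (Hu : forall x, 0 <= x <= 1 -> is_derive u x (Re (zeta * p' (RtoC x * zeta)))%C)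
    by (intros x Hx; apply is_derive_Re, is_Pderive_ray, Hd, Hin, Hx).
  replace (Re (p zeta)) with (u 1) by (unfold u; now rewrite Cmult_1_l).
  destruct (Rlt_dec 0 (u 1)) as [|Hneg]; [easy|]. exfalso.
  destruct (continuity_ab_min u 0 1) as [xm [Hmin Hxm]]; [lra| |].
  { intros c Hc. apply continuity_pt_filterlim, (@ex_derive_continuous R_AbsRing R_NormedModule).
    eexists. now apply Hu. }
  assert (Hu0 : u 0 = Re (p 0)) by (unfold u; now rewrite Cmult_0_l).
  assert (Hxm0 : 0 < xm).
  { destruct (Req_dec xm 0) as [E|]; [|lra]. specialize (Hmin 1 ltac:(lra)). rewrite E in Hmin. lra. }
  assert (Hu' : Re (zeta * p' (RtoC xm * zeta))%C <= 0).
  { apply (derive_nonpos_at_left_min u 0 xm); [now apply Hu | easy |].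
    intros c Hc. apply Hmin. lra. }
  specialize (Hcomb _ (Hin xm Hxm)).
  replace (Re (RtoC g * p (RtoC xm * zeta) + RtoC k * (RtoC xm * zeta) * p' (RtoC xm * zeta))%C)
    with (g * u xm + k * xm * Re (zeta * p' (RtoC xm * zeta))%C) in Hcomb.
  - specialize (Hmin 1 ltac:(lra)). assert (0 <= k * xm) by nra. nra.
  - unfold u. generalize (p (RtoC xm * zeta)%C) (p' (RtoC xm * zeta)%C). intros [] [].
    destruct zeta. unfold Re. unfold_C_ops. ring.
Qed.

Lemma Re_on_ray_ge_cubic (T p p' : C -> C) (z : C) :
  (forall w, Cmod w < 1 -> is_Cderive T w (p w) /\ is_Cderive p w (p' w)) ->
  (forall w, Cmod w < 1 -> 0 <= Re (p w)) -> Re (p 0) = 1 -> Cmod z < 1 ->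
  forall x, 0 <= x <= 1 -> 1 - 2 * x + 2 * x ^ 2 - 2 * x ^ 3 <= Re (p (RtoC x * z)%C).
Proof.
  intros HT Hpos Hp0 Hz x Hx. pose proof (Cmod_ge_0 z).
  set (r := Cmod z) in *. set (rho := (1 + r) / 2).
  assert (Hxz : Cmod (RtoC x * z) = x * r) by (rewrite Cmod_mult, Cmod_R, Rabs_pos_eq by lra; reflexivity).
  pose proof (harnack_lower_bound T p p' HT Hpos (RtoC x * z) rho) as Hh.
  rewrite Hxz, Hp0, Rmult_1_r in Hh. specialize (Hh ltac:(unfold rho; nra)).
  assert (Hcmp : (1 - x) / (1 + x) <= (rho - x * r) / (rho + x * r)).
  { apply (Rmult_le_reg_r ((1 + x) * (rho + x * r))); [unfold rho; nra|].
    replace ((1 - x) / (1 + x) * ((1 + x) * (rho + x * r))) with ((1 - x) * (rho + x * r))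
      by (field; lra).
    replace ((rho - x * r) / (rho + x * r) * ((1 + x) * (rho + x * r))) with ((rho - x * r) * (1 + x))
      by (field; unfold rho; nra).
    unfold rho; nra. }
  (* (1 - 2x + 2x^2 - 2x^3)(1 + x) = 1 - x - 2x^4 *)
  assert (Hcubic : 1 - 2 * x + 2 * x ^ 2 - 2 * x ^ 3 <= (1 - x) / (1 + x)).
  { apply (Rmult_le_reg_r (1 + x)); [lra|].
    replace ((1 - x) / (1 + x) * (1 + x)) with (1 - x) by (field; lra). nra. }
  lra.
Qed.

Section ClassR.
Variables (F1 F2 F3 : C -> C).
Hypothesis HF1 : forall w, Cmod w < 1 -> is_Cderive F1 w (F2 w).
Hypothesis HF2 : forall w, Cmod w < 1 -> is_Cderive F2 w (F3 w).
Hypothesis HF10 : F1 0 = 1%C.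

Let p w := (F1 w + w * F2 w)%C.
Let p' w := (F2 w + (F2 w + w * F3 w))%C.

Lemma is_Cderive_zF1 w : Cmod w < 1 ->
  is_Cderive (fun x => x * F1 x)%C w (p w) /\ is_Cderive p w (p' w).
Proof.
  intros Hw. split.
  - eapply is_Cderive_eq; [| exact (is_Cderive_mult _ _ _ _ _ (is_Cderive_id w) (HF1 w Hw))].
    unfold p. cbv beta. ring.
  - eapply is_Cderive_eq; [| exact (is_Cderive_plus _ _ _ _ _ (HF1 w Hw)
      (is_Cderive_mult _ _ _ _ _ (is_Cderive_id w) (HF2 w Hw)))].
    unfold p'. cbv beta. ring.
Qed.

Lemma Re_deriv_zF1_at_0 : Re (p 0) = 1.
Proof. unfold p. rewrite HF10, Cmult_0_l, Cplus_0_r. reflexivity. Qed.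

Lemma Re_deriv_zF1_pos gamma delta lambda : 0 <= lambda -> lambda < gamma -> gamma <= delta ->
  (forall w, Cmod w < 1 -> Re (RtoC gamma * F1 w + RtoC delta * w * F2 w
                               + RtoC ((delta - gamma) / 2) * (w * w) * F3 w)%C > lambda) ->
  forall w, Cmod w < 1 -> 0 < Re (p w).
Proof.
  intros Hl Hlg Hgd Hcond.
  apply (Re_pos_of_Re_combination_pos p p' gamma ((delta - gamma) / 2)); try lra.
  - rewrite Re_deriv_zF1_at_0. lra.
  - intros w Hw. apply is_Cderive_zF1, Hw.
  - intros w Hw. specialize (Hcond w Hw).
    enough (Re (RtoC gamma * p w + RtoC ((delta - gamma) / 2) * w * p' w)%C
      = Re (RtoC gamma * F1 w + RtoC delta * w * F2 w + RtoC ((delta - gamma) / 2) * (w * w) * F3 w)%C)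
      by lra.
    f_equal. unfold p, p'. rewrite RtoC_div, RtoC_minus. field. lra.
Qed.

Lemma Re_F1_on_ray_ge (z : C) : z <> 0%C -> Cmod z < 1 -> (forall w, Cmod w < 1 -> 0 <= Re (p w)) ->
  forall y, 0 <= y <= 1 -> 1 - y + 2 * y ^ 2 / 3 - y ^ 3 / 2 <= Re (F1 (RtoC y * z)).
Proof.
  intros Hz0 Hz Hpos y Hy.
  pose proof (Re_ray_lower_bound (fun x => x * F1 x)%C p
    (fun x => x - x ^ 2 + 2 * x ^ 3 / 3 - x ^ 4 / 2) (fun x => 1 - 2 * x + 2 * x ^ 2 - 2 * x ^ 3)
    z Hz0) as H.
  specialize (H ltac:(intros x Hx; apply is_Cderive_zF1, Cmod_ray_lt_1; easy)).
  specialize (H ltac:(intros x _; auto_derive; [easy | field])).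
  specialize (H (Re_on_ray_ge_cubic _ p _ z is_Cderive_zF1 Hpos Re_deriv_zF1_at_0 Hz) y Hy).
  cbv beta in H.
  replace (RtoC y * z * F1 (RtoC y * z) / z)%C with (F1 (RtoC y * z) * RtoC y)%C in H
    by (field; exact Hz0).
  rewrite Re_mult_RtoC in H.
  replace (Re (0 * F1 0 / z)%C) with 0 in H by (unfold Cdiv; now rewrite !Cmult_0_l).
  destruct (Req_dec y 0) as [-> | Hy0].
  - rewrite Cmult_0_l, HF10. simpl. lra.
  - apply (Rmult_le_reg_l y); [lra|]. nra.
Qed.
End ClassR.

Theorem lemma14 (gamma delta lambda : R) (F F1 F2 F3 : C -> C) :
  0 <= lambda -> lambda < gamma -> gamma <= delta ->
  classR gamma delta lambda F F1 F2 F3 ->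
  forall z : C, in_U z -> Re (Fquot F z) > 1 / 2.
Proof.
  intros Hl Hlg Hgd [[[HF [HF1 HF2]] [HF0 HF10]] Hcond] z Hz.
  unfold Fquot. destruct (Ceq_dec z 0) as [_ | Hz0]; [simpl; lra|].
  pose proof (Re_deriv_zF1_pos F1 F2 F3 HF1 HF2 HF10 gamma delta lambda Hl Hlg Hgd Hcond) as Hpos.
  pose proof (Re_F1_on_ray_ge F1 F2 F3 HF1 HF2 HF10 z Hz0 Hz
    (fun w Hw => Rlt_le _ _ (Hpos w Hw))) as HF1ray.
  pose proof (Re_ray_lower_bound F F1
    (fun x => x - x ^ 2 / 2 + 2 * x ^ 3 / 9 - x ^ 4 / 8) (fun x => 1 - x + 2 * x ^ 2 / 3 - x ^ 3 / 2)
    z Hz0) as H.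
  specialize (H ltac:(intros x Hx; apply HF, Cmod_ray_lt_1; easy)).
  specialize (H ltac:(intros x _; auto_derive; [easy | field]) HF1ray 1 ltac:(lra)).
  rewrite Cmult_1_l, HF0 in H. cbv beta in H.
  replace (Re (0 / z)%C) with 0 in H by (unfold Cdiv; now rewrite Cmult_0_l).
  lra.
Qed.
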